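(* Any unsound deterministic negotiation contains an anti-pattern (of type $\mathcal{B}$, $\mathcal{F}$ or $\mathcal{C}$).
   Context: A negotiation is a tuple $\mathcal{N}=(\mathit{Proc},N,\mathit{dom},R,\delta)$ where $\mathit{Proc}$ is a finite set of processes, $N$ is a finite set of nodes, $\mathit{dom}:N\to 2^{\mathit{Proc}}\setminus\{\emptyset\}$, there are two distinguished nodes $n_{\mathit{init}},n_{\mathit{fin}}$ with $\mathit{dom}(n_{\mathit{init}})=\mathit{dom}(n_{\mathit{fin}})=\mathit{Proc}$, $R$ is a set of results, each node $n$ has a set $\mathit{out}(n)\subseteq R$ of results (nonempty for $n\neq n_{\mathit{fin}}$), and $\delta(n,a,p)\subseteq N$ is defined and nonempty exactly when $a\in\mathit{out}(n)$ and $p\in\mathit{dom}(n)$, with $p\in\mathit{dom}(n')$ for all $n'\in\delta(n,a,p)$. $\mathcal{N}$ is deterministic if every $\delta(n,a,p)$ is a singleton, identified with its element. A configuration is a map $C$ assigning to each process a nonempty set of nodes; $C_{\mathit{init}}(p)=\{n_{\mathit{init}}\}$, $C_{\mathit{fin}}(p)=\{n_{\mathit{fin}}\}$. A node $n$ is enabled in $C$ if $n\in C(p)$ for all $p\in\mathit{dom}(n)$. If $n$ is enabled and $a\in\mathit{out}(n)$ then $C\xrightarrow{(n,a)}C'$ with $C'(p)=\delta(n,a,p)$ for $p\in\mathit{dom}(n)$, $C'(p)=C(p)$ otherwise. Runs are sequences of such steps; $\mathcal{N}$ is sound if every finite run from $C_{\mathit{init}}$ can be extended to a finite run ending in $C_{\mathit{fin}}$.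 The graph of $\mathcal{N}$ has vertex set $N$ and edges $n\xrightarrow{p,a}n'$ whenever $n'\in\delta(n,a,p)$; a local path is a path in this graph; a $p$-path is a local path all of whose edges are labelled by process $p$; a local circuit is a local path with at least one edge whose first and last nodes coincide. A node $n$ of a local path $\pi$ dominates $\pi$ if $\mathit{dom}(m)\subseteq\mathit{dom}(n)$ for every node $m$ of $\pi$. A tuple $(p_1,p_2,n_1,n_2)\in\mathit{Proc}^2\times N^2$ is a fork of a deterministic $\mathcal{N}$ if there is a local path from $n_{\mathit{init}}$ to a node $n$ and a result $a\in\mathit{out}(n)$ such that $p_i\in\mathit{dom}(n)\cap\mathit{dom}(n_i)$ for $i=1,2$, and for $i=1,2$ there is a $p_i$-path $\pi_i$ from $\delta(n,a,p_i)$ to $n_i$, with $\pi_1,\pi_2$ having no node in common. Anti-patterns: type $\mathcal{B}$: a $p$-path from $n_{\mathit{init}}$ to a node $n$ such that no $p$-path leads from $n$ to $n_{\mathit{fin}}$; type $\mathcal{F}$: a fork $(p_1,p_2,n_1,n_2)$ with $p_2\in\mathit{dom}(n_1)$ and $p_1\in\mathit{dom}(n_2)$; type $\mathcal{C}$: a local circuit without a dominating node. *)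

From Stdlib Require Import Relations.
From mathcomp Require Import all_boot.
Set Implicit Arguments. Unset Strict Implicit. Unset Printing Implicit Defensive.

Record negotiation := Negotiation {
  Proc : finType;
  Node : finType;
  Res : finType;
  dom : Node -> {set Proc};
  ninit : Node;
  nfin : Node;
  out : Node -> {set Res};
  delta : Node -> Res -> Proc -> {set Node};
  dom_nonempty : forall n, dom n != set0;
  ninit_nfin : ninit != nfin;
  dom_ninit : dom ninit = [set: Proc];
  dom_nfin : dom nfin = [set: Proc];
  out_nonempty : forall n, n != nfin -> out n != set0;
  (* delta n a p is defined and nonempty exactly when a in out n and p in dom n;
     elsewhere it is (by convention) empty *)
  delta_nonempty : forall n a p,
    (delta n a p != set0) = (a \in out n) && (p \in dom n);
  delta_dom : forall n a p n', n' \in delta n a p -> p \in dom n'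
}.

Section Defs.
Variable N : negotiation.

Definition deterministic : Prop :=
  forall (n : Node N) (a : Res N) (p : Proc N), a \in out n -> p \in dom n ->
    exists m, delta n a p = [set m].

Definition config := {ffun Proc N -> {set Node N}}.

Definition Cinit : config := [ffun _ => [set ninit N]].
Definition Cfin : config := [ffun _ => [set nfin N]].

Definition enabled (C : config) (n : Node N) : bool :=
  [forall p in dom n, n \in C p].

Definition step (C C' : config) : Prop :=
  exists (n : Node N) (a : Res N), enabled C n /\ a \in out n /\
    C' = [ffun p => if p \in dom n then delta n a p else C p].

Definition reachable : config -> config -> Prop := clos_refl_trans config step.

Definition sound : Prop :=
  forall C, reachable Cinit C -> reachable C Cfin.

Definition ledge : rel (Node N) :=
  fun n n' => [exists p : Proc N, exists a : Res N, n' \in delta n a p].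
Definition pedge (p : Proc N) : rel (Node N) :=
  fun n n' => [exists a : Res N, n' \in delta n a p].

(* a local path is given by its first node x and the list s of the
   following nodes; its nodes are x :: s and its last node is last x s *)
Definition local_path_from_to (x y : Node N) : Prop :=
  exists s, path ledge x s /\ last x s = y.
Definition p_path_from_to (p : Proc N) (x y : Node N) : Prop :=
  exists s, path (pedge p) x s /\ last x s = y.

Definition fork (p1 p2 : Proc N) (n1 n2 : Node N) : Prop :=
  exists (n : Node N) (a : Res N), local_path_from_to (ninit N) n /\ a \in out n /\
    p1 \in dom n :&: dom n1 /\ p2 \in dom n :&: dom n2 /\
    exists m1 m2 s1 s2,
      delta n a p1 = [set m1] /\ delta n a p2 = [set m2] /\
      path (pedge p1) m1 s1 /\ last m1 s1 = n1 /\
      path (pedge p2) m2 s2 /\ last m2 s2 = n2 /\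
      [disjoint (m1 :: s1) & (m2 :: s2)].

Definition antipattern_B : Prop :=
  exists (p : Proc N) (n : Node N), p_path_from_to p (ninit N) n /\ ~ p_path_from_to p n (nfin N).

Definition antipattern_F : Prop :=
  exists (p1 p2 : Proc N) (n1 n2 : Node N), fork p1 p2 n1 n2 /\ p2 \in dom n1 /\ p1 \in dom n2.

Definition dominates (n : Node N) (nodes : seq (Node N)) : bool :=
  all (fun m => dom m \subset dom n) nodes.

Definition antipattern_C : Prop :=
  exists (x : Node N) (s : seq (Node N)), s != [::] /\ path ledge x s /\ last x s = x /\
    ~~ has (fun n => dominates n (x :: s)) (x :: s).

End Defs.

From Stdlib Require Import Relations Classical ClassicalEpsilon.
From mathcomp Require Import all_boot.
Set Implicit Arguments. Unset Strict Implicit. Unset Printing Implicit Defensive.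

(* In a deterministic negotiation every reachable configuration puts each
   process p at a single node, reached from n_init by a p-path; two processes
   at different nodes have moreover diverged: they last met at some node and
   have since moved along paths avoiding each other's domains.  If the
   negotiation is unsound, some reachable configuration cannot reach C_fin,
   and a bottom strongly connected component below it is a deadlock unless
   there is an anti-pattern B: a node enabled there could be followed along a
   p-path to n_fin, every node of which would become enabled in turn.  In a deadlock each process
   p waits at a node d p for some process w p located elsewhere.  Following the
   path of w p to n_fin until it first meets a node involving p either closes
   a fork of type F, or gives a local path from d (w p) to d p that meets the
   domain of p only at its end; chaining these paths along a cycle of w yields
   a circuit that no node dominates. *)

Lemma clos_rt_bottom (T : finType) (R : relation T) (x : T) :
  exists2 y, clos_refl_trans T R x y &
    forall z, clos_refl_trans T R y z -> clos_refl_trans T R z y.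
Proof.
pose reachb y z := if excluded_middle_informative (clos_refl_trans T R y z)
  then true else false.
have reachbP y z : reflect (clos_refl_trans T R y z) (reachb y z).
  by rewrite /reachb; case: excluded_middle_informative; constructor.
pose succ y := [set z | reachb y z].
have [y /reachbP xy y_min] :=
  arg_minnP (fun y => #|succ y|) (introT (reachbP x x) (rt_refl _ _ x)).
exists y => // z yz.
have succ_z : succ z \subset succ y.
  by apply/subsetP=> t; rewrite !inE => /reachbP zt; apply/reachbP/(rt_trans _ _ _ z).
have : succ z == succ y.
  by rewrite eqEcard succ_z y_min //; apply/reachbP/(rt_trans _ _ _ y).
move/eqP/setP/(_ y); rewrite !inE => zy_yy.
by apply/reachbP; rewrite zy_yy; apply/reachbP/rt_refl.
Qed.

Lemma iter_periodic (T : finType) (f : T -> T) (x : T) :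
  exists q n, 0 < n /\ iter n f q = q.
Proof.
have /trajectP[i lt_i_k iter_k] := looping_order f x.
exists (iter i f x), (order f x - i); rewrite subn_gt0 lt_i_k.
by rewrite -iterD subnK ?(ltnW lt_i_k).
Qed.

Lemma path_prefix_to_first (T : eqType) (e : rel T) (P : pred T) x t :
  path e x t -> P (last x t) ->
  exists u, [/\ path e x u, P (last x u) & {in belast x u, forall m, ~~ P m}].
Proof.
elim: t x => [|y t IHt] x /=; first by exists [::].
case/andP=> exy pt Pt; have [Px|nPx] := boolP (P x); first by exists [::].
have [u [pu Pu u_notP]] := IHt y pt Pt.
exists (y :: u); split; rewrite /= ?exy //.
by move=> m; rewrite inE => /predU1P[->|/u_notP].
Qed.

Section Negotiation.
Variable N : negotiation.
Implicit Types (p q : Proc N) (a : Res N) (n k m x y : Node N) (s u : seq (Node N)).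

Lemma dom_ninitT p : p \in dom (ninit N).
Proof. by rewrite dom_ninit inE. Qed.

Lemma dom_nfinT p : p \in dom (nfin N).
Proof. by rewrite dom_nfin inE. Qed.

Lemma pedgeP p x y :
  reflect (exists2 a, a \in out x & y \in delta x a p) (pedge p x y).
Proof.
apply: (iffP existsP) => [[a y_xa]|[a _ y_xa]]; last by exists a.
exists a => //; have : delta x a p != set0 by apply/set0Pn; exists y.
by rewrite delta_nonempty => /andP[].
Qed.

Lemma pedge_dom p x y : pedge p x y -> p \in dom y.
Proof. by case/existsP=> a /delta_dom. Qed.

Lemma p_path_dom p x s :
  path (pedge p) x s -> p \in dom x -> {in x :: s, forall m, p \in dom m}.
Proof.
elim: s x => [|y s IHs] x /=; first by move=> _ px m /[!inE] /eqP->.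
case/andP=> /pedge_dom py ys px m /[!inE] /predU1P[->|] //.
exact: IHs.
Qed.

Lemma p_path_local p x s : path (pedge p) x s -> path (@ledge N) x s.
Proof.
by apply: sub_path => y z /existsP[a yz]; apply/existsP; exists p; apply/existsP; exists a.
Qed.

Lemma delta1_defined n a p m : delta n a p = [set m] -> (a \in out n) && (p \in dom n).
Proof. by move=> nap; rewrite -delta_nonempty nap; apply/set0Pn; exists m; rewrite inE. Qed.

Lemma delta1_dom n a p m : delta n a p = [set m] -> p \in dom m.
Proof. by move=> nap; apply: (@delta_dom _ n a); rewrite nap inE. Qed.

Inductive diverged p q (kp kq : Node N) : Prop :=
  Diverged (n : Node N) (a : Res N) (mp mq : Node N) (sp sq : seq (Node N)) of
    local_path_from_to (ninit N) n &
    delta n a p = [set mp] & delta n a q = [set mq] &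
    path (pedge p) mp sp & last mp sp = kp & {in belast mp sp, forall j, q \notin dom j} &
    path (pedge q) mq sq & last mq sq = kq & {in belast mq sq, forall j, p \notin dom j}.

Lemma diverged_sym p q kp kq : diverged p q kp kq -> diverged q p kq kp.
Proof.
case=> n a mp mq sp sq init_n p_mp q_mq psp lp sp_q qsq lq sq_p.
exact: Diverged init_n q_mq p_mp qsq lq sq_p psp lp sp_q.
Qed.

Lemma diverged_extend p q kp kq u :
  diverged p q kp kq -> path (pedge p) kp u ->
  {in belast kp u, forall j, q \notin dom j} -> diverged p q (last kp u) kq.
Proof.
case=> n a mp mq sp sq init_n p_mp q_mq psp <- sp_q qsq lq sq_p psu su_q.
apply: (Diverged (sp := sp ++ u)) init_n p_mp q_mq _ _ _ qsq lq sq_p.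
- by rewrite cat_path psp.
- by rewrite last_cat.
by move=> j; rewrite belast_cat mem_cat => /orP[/sp_q|/su_q].
Qed.

Lemma diverged_fork p q kp kq :
  diverged p q kp kq -> kp != kq -> q \in dom kp -> p \in dom kq -> antipattern_F N.
Proof.
case=> n a mp mq sp sq init_n p_mp q_mq psp lp sp_q qsq lq sq_p kpq q_kp p_kq.
have p_sp := p_path_dom psp (delta1_dom p_mp).
have q_sq := p_path_dom qsq (delta1_dom q_mq).
have /andP[a_n p_n] := delta1_defined p_mp; have /andP[_ q_n] := delta1_defined q_mq.
exists p, q, kp, kq; split=> //; exists n, a; split=> //; split=> //.
rewrite !inE p_n q_n -lp -lq p_sp ?q_sq ?mem_last //; split=> //; split=> //.
exists mp, mq, sp, sq; do 6!split=> //.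
rewrite disjoint_has; apply/hasPn => j /=.
rewrite lastI lp mem_rcons inE => /predU1P[->|j_sp].
  rewrite lastI lq mem_rcons inE (negbTE kpq) /=.
  by apply/negP => /sq_p; rewrite -lp p_sp ?mem_last.
by apply: contraNN (sp_q j j_sp); apply: q_sq.
Qed.

Definition entry_path p x y u : bool :=
  [&& path (@ledge N) x u, last x u == y & all (fun m => (p \in dom m) ==> (m == y)) (x :: u)].

Section Circuit.
Variables (d : Proc N -> Node N) (w : Proc N -> Proc N) (seg : Proc N -> seq (Node N)).
Hypothesis dom_d : forall p, p \in dom (d p).
Hypothesis d_w : forall p, d (w p) != d p.
Hypothesis seg_entry : forall p, entry_path p (d (w p)) (d p) (seg p).

Lemma seg_path p : path (@ledge N) (d (w p)) (seg p).
Proof. by case/and3P: (seg_entry p). Qed.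

Lemma seg_last p : last (d (w p)) (seg p) = d p.
Proof. by case/and3P: (seg_entry p) => _ /eqP. Qed.

Lemma seg_dom p m : m \in d (w p) :: seg p -> p \in dom m -> m = d p.
Proof. by case/and3P: (seg_entry p) => _ _ /allP seg_p /seg_p /implyP/[apply]/eqP. Qed.

Lemma notin_dom_d_w p : p \notin dom (d (w p)).
Proof. by apply: contra (d_w p) => /(seg_dom (mem_head _ _)) ->. Qed.

Lemma d_in_seg p : d p \in seg p.
Proof.
have := seg_last p; case: (seg p) => [/eqP|m s <-]; last exact: mem_last m s.
by rewrite (negbTE (d_w p)).
Qed.

Fixpoint walk q l : seq (Node N) :=
  if l is l'.+1 then seg (iter l' w q) ++ walk q l' else [::].

Lemma walk_path q l :
  path (@ledge N) (d (iter l w q)) (walk q l) /\ last (d (iter l w q)) (walk q l) = d q.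
Proof.
elim: l => [|l [IHp IHl]] //=.
by rewrite cat_path last_cat seg_path seg_last IHp IHl.
Qed.

Lemma walkP q l m : reflect (exists2 i, i < l & m \in seg (iter i w q)) (m \in walk q l).
Proof.
elim: l => [|l IHl] /=; first by right; case.
rewrite mem_cat; apply: (iffP orP) => [[m_l|/IHl[i lt_il m_i]]|[i]].
- by exists l.
- by exists i; first exact: ltnW.
rewrite ltnS leq_eqVlt => /predU1P[->|lt_il m_i]; first by left.
by right; apply/IHl; exists i.
Qed.

Lemma antipattern_C_of_entry_paths : antipattern_C N.
Proof.
have /set0Pn[x0 _] := dom_nonempty (ninit N).
have [q [n [n_gt0 period]]] := iter_periodic w x0.
have [walk_p walk_l] := walk_path q n; rewrite period in walk_p walk_l.
have d_walk j : j < n -> d (iter j w q) \in walk q n.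
  by move=> lt_jn; apply/walkP; exists j; rewrite ?d_in_seg.
have dq_walk : d q \in walk q n by exact: d_walk 0 n_gt0.
exists (d q), (walk q n); split; first by apply: contraTneq dq_walk => ->.
split=> //; split=> //.
apply/hasPn => m m_c; apply/negP => /allP dom_m.
have /walkP[i lt_in m_i] : m \in walk q n by move: m_c; rewrite inE => /predU1P[->|].
have orbit_dom j : j < n -> iter j w q \in dom m.
  by move=> /d_walk dj; apply: (subsetP (dom_m _ _)) (dom_d _); rewrite inE dj orbT.
(* m lies on the segment of some p_i, so m = d p_i, whose domain misses the
   w-predecessor of p_i; yet m dominates the whole orbit. *)
have m_d : m = d (iter i w q) by apply: seg_dom (orbit_dom i lt_in); rewrite inE m_i orbT.
have [j lt_jn w_j] : exists2 j, j < n & w (iter j w q) = iter i w q.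
  case: i lt_in {m_i m_d} => [|i] lt_in; last by exists i; first exact: ltnW.
  by exists n.-1; rewrite ?ltn_predL // -iterS prednK.
by move: (notin_dom_d_w (iter j w q)); rewrite w_j -m_d orbit_dom.
Qed.

End Circuit.

Lemma reachable_refl (C : config N) : reachable C C.
Proof. exact: rt_refl. Qed.

Lemma reachable_step (C C' : config N) : step C C' -> reachable C C'.
Proof. exact: rt_step. Qed.

Lemma reachable_trans (C1 C2 C3 : config N) :
  reachable C1 C2 -> reachable C2 C3 -> reachable C1 C3.
Proof. exact: rt_trans. Qed.

Lemma leave_enabled (X Y : config N) p x :
  reachable X Y -> X p = [set x] -> Y p != [set x] -> exists2 Z, reachable X Z & enabled Z x.
Proof.
move=> XY; elim: (clos_rt_rt1n _ _ _ _ XY) => {XY} [X' -> /eqP//|].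
move=> X0 X1 Y' [n [a [en_n [a_n X01]]]] _ IH X0p Y'p.
have [pn|pn] := boolP (p \in dom n).
  exists X0; first exact: reachable_refl.
  by move/forallP/(_ p): (en_n); rewrite pn X0p inE => /eqP <-.
have [|Z X1Z en_Z] := IH _ Y'p; first by rewrite X01 ffunE (negbTE pn).
by exists Z => //; apply: reachable_trans _ X1Z; apply: reachable_step; exists n, a.
Qed.

Section Deterministic.
Hypothesis detN : deterministic N.
Implicit Types (C D E : config N).

Definition det_invariant E : Prop :=
  (forall p, exists2 k, E p = [set k] & p_path_from_to p (ninit N) k) /\
  (forall p q kp kq, E p = [set kp] -> E q = [set kq] -> kp != kq -> diverged p q kp kq).

Lemma det_invariant_init : det_invariant (Cinit N).
Proof.
split=> [p|p q kp kq]; first by exists (ninit N); rewrite ?ffunE //; exists [::].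
by rewrite !ffunE => /set1_inj <- /set1_inj <-; rewrite eqxx.
Qed.

Section Invariant.
Variable E : config N.
Hypothesis invE : det_invariant E.

Lemma inv_p_path p k : E p = [set k] -> p_path_from_to p (ninit N) k.
Proof. by case: invE => /(_ p)[k' -> path_k'] _ /set1_inj <-. Qed.

Lemma inv_dom p k : E p = [set k] -> p \in dom k.
Proof.
by case/inv_p_path=> s [ps <-]; apply: (p_path_dom ps (dom_ninitT p)); rewrite mem_last.
Qed.

Lemma inv_enabled p k : enabled E k -> p \in dom k -> E p = [set k].
Proof.
case: invE => /(_ p)[k' Ep _] _ /forallP/(_ p) + pk.
by rewrite pk Ep inE => /implyP/(_ isT)/eqP->.
Qed.

Lemma inv_step E' : step E E' -> det_invariant E'.
Proof.
case=> n [a [en_n [a_n ->]]].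
have at_n p : p \in dom n -> E p = [set n] by apply: inv_enabled.
have next p : p \in dom n -> exists2 m, delta n a p = [set m] & p_path_from_to p (ninit N) m.
  move=> pn; have [m nap] := detN a_n pn; exists m => //.
  have [s [ps ls]] := inv_p_path (at_n p pn); exists (rcons s m).
  by rewrite rcons_path last_rcons ps ls; split=> //; apply/existsP; exists a; rewrite nap inE.
have leave p q kp kq : p \in dom n -> q \notin dom n -> E q = [set kq] ->
    delta n a p = [set kp] -> diverged p q kp kq.
  move=> pn qn Eq nap; have n_kq : n != kq by apply: contraNneq qn => ->; apply: inv_dom.
  have := diverged_extend (u := [:: kp]) (invE.2 _ _ _ _ (at_n p pn) Eq n_kq).
  by apply=> [|j /[!inE] /eqP-> //]; rewrite /= andbT; apply/existsP; exists a; rewrite nap inE.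
split=> [p|p q kp kq]; rewrite !ffunE.
  case: ifP => [pn|_]; last exact: invE.1.
  exact: next.
case: ifP => pn; case: ifP => qn.
- move=> nap naq _; have [s [ps ls]] := inv_p_path (at_n p pn).
  apply: (Diverged (sp := [::]) (sq := [::]) _ nap naq) => //.
  by exists s; rewrite (p_path_local ps).
- by move=> nap Eq _; apply: leave => //; rewrite qn.
- by move=> Ep naq _; apply/diverged_sym/leave => //; rewrite pn.
- exact: invE.2.
Qed.

End Invariant.

Lemma inv_reachable C E : reachable C E -> det_invariant C -> det_invariant E.
Proof.
elim=> [C' E' st invC|//|C' E' E'' _ IH1 _ IH2 /IH1/IH2//].
exact: inv_step invC _ st.
Qed.

Hypothesis noB : ~ antipattern_B N.

Lemma p_path_to_nfin p k : p_path_from_to p (ninit N) k -> p_path_from_to p k (nfin N).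
Proof. by move=> init_k; apply: NNPP => k_fin; apply: noB; exists p, k. Qed.

Section Bottom.
Variable D : config N.
Hypothesis reachD : reachable (Cinit N) D.
Hypothesis bottomD : forall E, reachable D E -> reachable E D.

Lemma bottom_invariant E : reachable D E -> det_invariant E.
Proof. by move=> DE; apply: inv_reachable (reachable_trans reachD DE) det_invariant_init. Qed.

Lemma bottom_enabled_pedge p k k' :
  (exists2 E, reachable D E & enabled E k) -> p \in dom k -> pedge p k k' ->
  exists2 E, reachable D E & enabled E k'.
Proof.
case=> E DE en_k pk /pedgeP[a a_k k'_ka].
have Ep := inv_enabled (bottom_invariant DE) en_k pk.
have [m kap] := detN a_k pk.
pose E' : config N := [ffun r => if r \in dom k then delta k a r else E r].
have EE' : reachable E E' by apply: reachable_step; exists k, a.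
have E'p : E' p = [set k'] by rewrite ffunE pk kap; move: k'_ka; rewrite kap inE => /eqP->.
have [<-|kk'] := eqVneq k k'; first by exists E.
(* E' returns to E through D, so p has to leave k' again, and only k' can
   move it. *)
have E'E := reachable_trans (bottomD (reachable_trans DE EE')) DE.
have [|Z E'Z en_Z] := leave_enabled E'E E'p.
  by rewrite Ep; apply: contra_neq kk' => /set1_inj.
by exists Z => //; apply: reachable_trans (reachable_trans DE EE') E'Z.
Qed.

Lemma bottom_enabled_p_path p k s :
  (exists2 E, reachable D E & enabled E k) -> p \in dom k -> path (pedge p) k s ->
  exists2 E, reachable D E & enabled E (last k s).
Proof.
elim: s k => [|k' s IHs] k //= en_k pk /andP[kk' k's].
exact: IHs (bottom_enabled_pedge en_k pk kk') (pedge_dom kk') k's.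
Qed.

Lemma bottom_deadlock : ~ reachable D (Cfin N) -> forall n, ~~ enabled D n.
Proof.
move=> D_fin n; apply/negP => en_n; have /set0Pn[p pn] := dom_nonempty n.
have Dp := inv_enabled (bottom_invariant (reachable_refl D)) en_n pn.
have [s [ps ls]] := p_path_to_nfin (inv_p_path (bottom_invariant (reachable_refl D)) Dp).
have [E DE] := bottom_enabled_p_path (ex_intro2 _ _ D (reachable_refl D) en_n) pn ps.
rewrite ls => en_fin.
apply: D_fin; suff <- : E = Cfin N by [].
by apply/ffunP=> r; rewrite ffunE (inv_enabled (bottom_invariant DE) en_fin (dom_nfinT r)).
Qed.

End Bottom.

Lemma unsound_deadlock :
  ~ sound N -> exists2 D, reachable (Cinit N) D & forall n, ~~ enabled D n.
Proof.
move=> unsound.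
have [C reachC C_fin] : exists2 C, reachable (Cinit N) C & ~ reachable C (Cfin N).
  by apply: NNPP => no_C; apply: unsound => C reachC; apply: NNPP => C_fin; apply: no_C; exists C.
have [D CD bottomD] := clos_rt_bottom (@step N) C.
have reachD := reachable_trans reachC CD.
exists D => //; apply: bottom_deadlock reachD bottomD _ => D_fin.
exact/C_fin/(reachable_trans CD D_fin).
Qed.

Lemma entry_path_or_fork D p q kp kq :
  det_invariant D -> D p = [set kp] -> D q = [set kq] -> kp != kq -> q \in dom kp ->
  antipattern_F N \/ exists u, entry_path p kq kp u.
Proof.
move=> invD Dp Dq kpq q_kp.
have [t [qt lt]] := p_path_to_nfin (inv_p_path invD Dq).
have [|u [qu pu u_p]] := path_prefix_to_first (P := fun m => p \in dom m) qt.
  by rewrite lt dom_nfinT.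
have [lu|lu] := eqVneq (last kq u) kp; last first.
  left; apply: diverged_fork q_kp pu; last by rewrite eq_sym.
  exact/diverged_sym/(diverged_extend _ qu u_p)/diverged_sym/invD.2.
right; exists u; apply/and3P; split; [exact: p_path_local qu | by rewrite lu |].
apply/allP => m; rewrite lastI lu mem_rcons inE => /predU1P[->|/u_p/negbTE->] //.
by rewrite eqxx implybT.
Qed.

Lemma deadlock_antipattern_C D :
  reachable (Cinit N) D -> (forall n, ~~ enabled D n) -> ~ antipattern_F N ->
  antipattern_C N.
Proof.
move=> reachD deadD noF; have invD := inv_reachable reachD det_invariant_init.
have pos_ex p : exists k, D p == [set k] by have [k /eqP Dp _] := invD.1 p; exists k.
pose d p := xchoose (pos_ex p).
have Dd p : D p = [set d p] by apply/eqP; exact: xchooseP (pos_ex p).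
have blocker_ex p : exists r, (r \in dom (d p)) && (d r != d p).
  have /forallPn[r] := deadD (d p); rewrite negb_imply Dd inE => /andP[r_dp dr_dp].
  by exists r; rewrite r_dp eq_sym.
pose w p := xchoose (blocker_ex p).
have /all_and2[w_dom w_d] p : w p \in dom (d p) /\ d (w p) != d p.
  by apply/andP; exact: xchooseP (blocker_ex p).
have seg_ex p : exists u, entry_path p (d (w p)) (d p) u.
  have := entry_path_or_fork invD (Dd p) (Dd (w p)) _ (w_dom p).
  by rewrite eq_sym w_d => /(_ isT)[].
apply: (@antipattern_C_of_entry_paths d w (fun p => xchoose (seg_ex p))) => p.
- exact: (inv_dom invD (Dd p)).
- exact: w_d.
- exact: xchooseP.
Qed.

End Deterministic.
End Negotiation.

Theorem lemma3p10 (N : negotiation) :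
  deterministic N -> ~ sound N ->
  antipattern_B N \/ antipattern_F N \/ antipattern_C N.
Proof.
move=> detN unsound.
have [B|noB] := classic (antipattern_B N); first by left.
have [F|noF] := classic (antipattern_F N); first by right; left.
right; right; have [D reachD deadD] := unsound_deadlock detN noB unsound.
exact: deadlock_antipattern_C reachD deadD noF.
Qed.
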